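(* Let $n>1$ be an odd integer, $k\ge1$, and $p$ the smallest prime divisor of $n$. Then $\mathrm{C}^{n,k}_{\mathrm{RDH}}$ is a $\frac{1}{(p-1)n^{k-1}},\frac{1}{p-1}$-authentication code with secrecy for equiprobable source states on $\mathbb{Z}_n^k\setminus\{\mathbf{0}\}$; that is, it provides $\frac{1}{(p-1)n^{k-1}}$-secrecy on $\mathbb{Z}_n^k\setminus\{\mathbf{0}\}$ and is $\frac{1}{p-1}$-secure against substitution attacks.
   Context: For $\mathbf{y}\in(\mathbb{Z}_n^* )^k$ and $\mathbf{m}\in\mathbb{Z}_n^k$ let $\Upsilon_{\mathbf{y}}(\mathbf{m})=\sum_{i=1}^k m_iy_i\bmod n$. The code $\mathrm{C}^{n,k}_{\mathrm{RDH}}$ has source states $\mathcal{S}=\mathbb{Z}_n^k$, keys $\mathcal{K}=\mathbb{Z}_n^k\times(\mathbb{Z}_n^* )^k$ (pairs $\mathbf{x}\|\mathbf{y}$), ciphertexts $\mathcal{M}=\mathbb{Z}_n^k\times\mathbb{Z}_n$ (pairs $\mathbf{c}\|t$). Encryption: $\mathcal{E}_{\mathbf{x}\|\mathbf{y}}(\mathbf{m})=(\mathbf{m}+\mathbf{x}\bmod n)\,\|\,\Upsilon_{\mathbf{y}}(\mathbf{m})$ (componentwise addition). Decryption: $\mathcal{D}_{\mathbf{x}\|\mathbf{y}}(\mathbf{c}\|t)=\mathbf{c}-\mathbf{x}\bmod n$ if $\Upsilon_{\mathbf{y}}(\mathbf{c}-\mathbf{x})=t$, and $\bot$ otherwise.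 Source states and keys are chosen uniformly and independently. The code provides $\varepsilon$-secrecy on $\mathcal{S}'\subseteq\mathcal{S}$ if for every $\mathbf{m}\in\mathcal{S}'$ and every $c\in\mathcal{M}$ (with the conditioning event of positive probability), $\Pr_{\mathbf{m}'\leftarrow\mathcal{S},\kappa\leftarrow\mathcal{K}}[\mathbf{m}'=\mathbf{m}\mid\mathcal{E}_\kappa(\mathbf{m}')=c]\le\varepsilon$. A forger is an arbitrary function $\mathcal{F}:\mathcal{M}\to\mathcal{M}$; the code is $\delta$-secure against substitution attacks if for every forger $\mathcal{F}$, $\Pr_{\mathbf{m}\leftarrow\mathcal{S},\kappa\leftarrow\mathcal{K}}[\mathcal{F}(c)\ne c\ \wedge\ \mathcal{D}_\kappa(\mathcal{F}(c))\ne\bot]\le\delta$ where $c=\mathcal{E}_\kappa(\mathbf{m})$. It is an $\varepsilon,\delta$-authentication code with secrecy for equiprobable source states on $\mathcal{S}'$ if both hold. *)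

From HB Require Import structures.
From mathcomp Require Import all_boot all_order all_algebra.
Set Implicit Arguments. Unset Strict Implicit. Unset Printing Implicit Defensive.
Import GRing.Theory Num.Theory.
Local Open Scope ring_scope.

Definition src (n k : nat) := {ffun 'I_k -> 'Z_n}.
(* Raw key type Z_n^k x Z_n^k; the actual key space requires y to be units. *)
Definition keyT (n k : nat) := (src n k * src n k)%type.
Definition ctT (n k : nat) := (src n k * 'Z_n)%type.

Definition keys (n k : nat) : {set keyT n k} :=
  [set kap : keyT n k | [forall i, kap.2 i \is a GRing.unit]].

Definition Ups (n k : nat) (y m : src n k) : 'Z_n := \sum_(i < k) m i * y i.

Definition enc (n k : nat) (kap : keyT n k) (m : src n k) : ctT n k :=
  ([ffun i => m i + kap.1 i], Ups kap.2 m).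

Definition dec (n k : nat) (kap : keyT n k) (c : ctT n k) : option (src n k) :=
  let m := [ffun i => c.1 i - kap.1 i] in
  if Ups kap.2 m == c.2 then Some m else None.

(* Pr_{m' <- S, kap <- K}[m' = m | E_kap(m') = c], as a ratio of counts
   (uniform independent choice of m' and kap). *)
Definition cond_prob (n k : nat) (m : src n k) (c : ctT n k) : rat :=
  (#|[set mk : src n k * keyT n k | (mk.2 \in keys n k) && (enc mk.2 mk.1 == c) && (mk.1 == m)]|%:R)
  / (#|[set mk : src n k * keyT n k | (mk.2 \in keys n k) && (enc mk.2 mk.1 == c)]|%:R).

Definition cond_event_count (n k : nat) (c : ctT n k) : nat :=
  #|[set mk : src n k * keyT n k | (mk.2 \in keys n k) && (enc mk.2 mk.1 == c)]|.

Definition provides_secrecy (n k : nat) (eps : rat) (S' : {set src n k}) : Prop :=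
  forall (m : src n k) (c : ctT n k), m \in S' ->
    (0 < cond_event_count c)%N -> cond_prob m c <= eps.

Definition forge_prob (n k : nat) (F : ctT n k -> ctT n k) : rat :=
  (#|[set mk : src n k * keyT n k | (mk.2 \in keys n k) &&
        (F (enc mk.2 mk.1) != enc mk.2 mk.1) && (dec mk.2 (F (enc mk.2 mk.1)) != None)]|%:R)
  / ((#|[set: src n k]| * #|keys n k|)%N%:R).

Definition substitution_secure (n k : nat) (delta : rat) : Prop :=
  forall F : ctT n k -> ctT n k, forge_prob F <= delta.

Definition auth_code_with_secrecy (n k : nat) (eps delta : rat) (S' : {set src n k}) : Prop :=
  provides_secrecy eps S' /\ substitution_secure n k delta.

From HB Require Import structures.
From mathcomp Require Import all_boot all_order all_algebra.
From mathcomp Require Import ring.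
Import GRing.Theory Num.Theory.
Local Open Scope ring_scope.

(* Encryptions (m, (x, y)) yielding a ciphertext (a, t) correspond to the pairs (m, y) with
   y a vector of units and Ups y m = t, the key part x = a - m being forced; for each such y
   exactly n^(k-1) messages qualify.  Both bounds thereby reduce to one estimate: for m <> 0,
   at most a fraction 1/(p-1) of the unit vectors y satisfy Ups y m = t.  To see it, pick j
   with m_j <> 0; multiplying y_j by c = 1, ..., p-1 maps the solution set injectively onto
   pairwise disjoint sets of unit vectors, since c - c' is a unit of Z_n for 0 < c, c' < p.
   A substitution of (a, t) by (a', t') is accepted by the key (x, y) exactly when
   Ups y (a' - a) = t' - t, an equation of the same kind. *)

Lemma card_sum_fibers {T C : finType} (f : T -> C) (A : {set T}) :
  #|A| = (\sum_c #|[set x in A | f x == c]|)%N.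
Proof.
rewrite -sum1_card (partition_big f predT) //=; apply: eq_bigr => c _.
by rewrite -sum1_card; apply: eq_bigl => x; rewrite inE.
Qed.

Lemma sum_nat_bool {T : finType} (A : {pred T}) (b : pred T) :
  (\sum_(x in A) b x)%N = #|[set x in A | b x]|.
Proof.
rewrite -sum1_card [RHS]big_mkcond [LHS]big_mkcond; apply: eq_bigr => x _.
by rewrite inE; case: (x \in A); case: (b x).
Qed.

Lemma ratio_le_inv (N D E : nat) : (0 < E)%N -> (E * N <= D)%N ->
  N%:R / D%:R <= (E%:R)^-1 :> rat.
Proof.
move=> E_gt0 le_ND; have [->|D_gt0] := posnP D; first by rewrite invr0 mulr0 invr_ge0.
by rewrite ler_pdivrMr ?ltr0n // ler_pdivlMl ?ltr0n // -natrM ler_nat.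
Qed.

Section SmallUnits.
Variable n : nat.
Hypothesis n_gt1 : (1 < n)%N.

Lemma pdiv_pred_gt0 : (0 < (pdiv n).-1)%N.
Proof. by rewrite ltn_predRL prime_gt1 ?pdiv_prime. Qed.

Lemma natr_unit_lt_pdiv (v : nat) : (0 < v < pdiv n)%N ->
  (v%:R : 'Z_n) \is a GRing.unit.
Proof.
case/andP=> v_gt0 v_lt_p; rewrite unitZpE // /coprime eqn_leq gcdn_gt0 v_gt0 orbT andbT.
rewrite leqNgt; apply/negP => g_gt1.
have := leq_trans (pdiv_min_dvd g_gt1 (dvdn_gcdl n v)) (dvdn_leq v_gt0 (dvdn_gcdr n v)).
by rewrite leqNgt v_lt_p.
Qed.

Lemma subr_natr_unit (v w : nat) : (0 < v < pdiv n)%N -> (0 < w < pdiv n)%N -> v != w ->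
  (v%:R - w%:R : 'Z_n) \is a GRing.unit.
Proof.
move=> /andP[v_gt0 v_lt_p] /andP[w_gt0 w_lt_p]; case: ltngtP => // [lt_vw|lt_wv] _.
  rewrite -opprB unitrN -natrB ?(ltnW lt_vw) //; apply: natr_unit_lt_pdiv.
  by rewrite subn_gt0 lt_vw (leq_ltn_trans (leq_subr _ _)).
rewrite -natrB ?(ltnW lt_wv) //; apply: natr_unit_lt_pdiv.
by rewrite subn_gt0 lt_wv (leq_ltn_trans (leq_subr _ _)).
Qed.

End SmallUnits.

Section RDHCode.
Variables n k : nat.
Hypotheses (n_gt1 : (1 < n)%N) (k_gt0 : (0 < k)%N).

Definition unit_vectors : {set src n k} := [set y : src n k | [forall i, y i \is a GRing.unit]].

Lemma card_Zn : #|{: 'Z_n}| = n.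
Proof. by rewrite card_ord Zp_cast. Qed.

Lemma card_src : #|{: src n k}| = (n ^ k)%N.
Proof. by rewrite card_ffun !card_ord Zp_cast. Qed.

Lemma card_keys : #|keys n k| = (n ^ k * #|unit_vectors|)%N.
Proof.
have -> : keys n k = setX [set: src n k] unit_vectors by apply/setP => -[x y]; rewrite !inE.
by rewrite cardsX cardsT card_src.
Qed.

Lemma UpsD (y m d : src n k) : Ups y (m + d) = Ups y m + Ups y d.
Proof. by rewrite /Ups -big_split; apply: eq_bigr => i _; rewrite ffunE mulrDl. Qed.

Lemma UpsB (y m d : src n k) : Ups y (m - d) = Ups y m - Ups y d.
Proof. by rewrite /Ups -sumrB; apply: eq_bigr => i _; rewrite !ffunE mulrBl. Qed.

Lemma Ups_delta (y : src n k) (j : 'I_k) (a : 'Z_n) :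
  Ups y [ffun i => if i == j then a else 0] = a * y j.
Proof.
rewrite /Ups (bigD1 j) //= big1 ?addr0 => [|i /negbTE ij]; first by rewrite ffunE eqxx.
by rewrite ffunE ij mul0r.
Qed.

Lemma encE (kap : keyT n k) (m : src n k) : enc kap m = (m + kap.1, Ups kap.2 m).
Proof. by rewrite /enc; congr pair; apply/ffunP => i; rewrite !ffunE. Qed.

Lemma decE (kap : keyT n k) (c : ctT n k) :
  dec kap c = if Ups kap.2 (c.1 - kap.1) == c.2 then Some (c.1 - kap.1) else None.
Proof.
rewrite /dec (_ : [ffun i => c.1 i - kap.1 i] = c.1 - kap.1) //.
by apply/ffunP => i; rewrite !ffunE.
Qed.

Lemma card_Ups_fiber {y : src n k} (t : 'Z_n) : y \in unit_vectors ->
  #|[set m | Ups y m == t]| = (n ^ k.-1)%N.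
Proof.
rewrite inE => /forallP y_unit; pose j := Ordinal k_gt0.
have fiber_shift t1 t2 : #|[set m | Ups y m == t1]| = #|[set m | Ups y m == t2]|.
  pose d : src n k := [ffun i => if i == j then (t2 - t1) / y j else 0].
  rewrite -(card_preimset _ (addIr (- d))); apply: eq_card => m; rewrite !inE.
  by rewrite UpsB Ups_delta divrK // subr_eq addrC subrK.
have := card_sum_fibers (Ups y) [set: src n k].
rewrite cardsT card_src (eq_bigr (fun=> #|[set m | Ups y m == t]|)) => [|t' _].
  rewrite sum_nat_const card_Zn -[in LHS](prednK k_gt0) expnS => /eqP.
  by rewrite eqn_mul2l eqn0Ngt ltnW //= => /eqP.
by rewrite -(fiber_shift t'); apply: eq_card => m; rewrite !inE.
Qed.

Lemma card_enc_preimage (a : src n k) (t : 'Z_n) (P : pred (src n k * keyT n k)) :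
  #|[set mk : src n k * keyT n k |
      (mk.2 \in keys n k) && (enc mk.2 mk.1 == (a, t)) && P mk]|
  = (\sum_(y in unit_vectors) #|[set m | (Ups y m == t) && P (m, ((a - m)%R, y))]|)%N.
Proof.
rewrite (card_sum_fibers (fun mk : src n k * keyT n k => mk.2.2)) [RHS]big_mkcond /=.
apply: eq_bigr => y _; case: ifP => y_unit; last first.
  apply: eq_card0 => -[m [x y']].
  rewrite !inE /=; case: (eqVneq y' y) => [->|]; last by rewrite andbF.
  by move: y_unit; rewrite inE => ->.
have inj_m : injective (fun m : src n k => (m, (a - m, y))) by move=> ? ? [].
rewrite -(card_imset _ inj_m); apply: eq_card => -[m [x y']].
rewrite !inE /= encE /= xpair_eqE; apply/idP/imsetP => [|[m' Hm' [-> -> ->]]].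
  move=> /andP[/andP[/and3P[_ /eqP ax e] hP] /eqP yy]; subst y'.
  have xE : x = a - m by rewrite -ax [m + x]addrC addrK.
  by exists m; rewrite ?inE -xE ?e.
move: Hm' y_unit; rewrite !inE => /andP[e hP] ->.
by rewrite addrC subrK e hP !eqxx.
Qed.

Definition scale_coord (j : 'I_k) (c : 'Z_n) (y : src n k) : src n k :=
  [ffun i => if i == j then c * y i else y i].

Lemma scale_coord_unit (j : 'I_k) (c : 'Z_n) (y : src n k) :
  c \is a GRing.unit -> y \in unit_vectors -> scale_coord j c y \in unit_vectors.
Proof.
rewrite !inE => c_unit /forallP y_unit; apply/forallP => i; rewrite ffunE.
by case: (i == j); rewrite ?unitrM ?c_unit y_unit.
Qed.

Lemma Ups_scale_coord_eq {j : 'I_k} {c c' : 'Z_n} {m y z : src n k} :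
  scale_coord j c y = scale_coord j c' z -> Ups y m = Ups z m ->
  c * y j = c' * z j /\ m j * y j = m j * z j.
Proof.
move=> /ffunP yz eq_Ups; have := yz j; rewrite !ffunE eqxx => cyz; split=> //.
move: eq_Ups; rewrite /Ups (bigD1 j) // [RHS](bigD1 j) //=.
rewrite (eq_bigr (fun i => m i * z i)) => [/addIr //|i /negbTE ij].
by have := yz i; rewrite !ffunE ij => ->.
Qed.

Lemma card_unit_fiber_le (m : src n k) (t : 'Z_n) : m != 0 ->
  ((pdiv n).-1 * #|[set y in unit_vectors | Ups y m == t]| <= #|unit_vectors|)%N.
Proof.
move=> m_neq0; have /existsP[j mj_neq0] : [exists j, m j != 0].
  apply: contraR m_neq0 => /existsPn m0; apply/eqP/ffunP => i.
  by have := m0 i; rewrite negbK ffunE => /eqP.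
pose B := [set y in unit_vectors | Ups y m == t].
pose f (vy : 'I_(pdiv n).-1 * src n k) := scale_coord j vy.1.+1%:R vy.2.
have small (v : 'I_(pdiv n).-1) : (0 < v.+1 < pdiv n)%N by rewrite /= -ltn_predRL.
have f_unit : f @: setX [set: _] B \subset unit_vectors.
  apply/subsetP => _ /imsetP[[v y] /setXP[_ /setIdP[y_unit _]] ->].
  exact/scale_coord_unit/y_unit/natr_unit_lt_pdiv.
have f_inj : {in setX [set: _] B &, injective f}.
  move=> [v y] [w z] /setXP[_ /setIdP[y_unit /eqP ey]] /setXP[_ /setIdP[_ /eqP ez]] fvw.
  have [] := Ups_scale_coord_eq fvw (etrans ey (esym ez)).
  move: y_unit; rewrite inE => /forallP y_unit /= on_j mj_yz.
  have vw : v = w.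
    apply/val_inj/eqP; apply: contraNT mj_neq0 => vw; apply/eqP.
    apply: (mulIr (y_unit j)); rewrite mul0r.
    apply: (mulrI (@subr_natr_unit n n_gt1 _ _ (small v) (small w) (vw : v.+1 != w.+1))).
    by rewrite mulr0 mulrBl mulrCA on_j mj_yz mulrCA subrr.
  subst w; congr pair; apply/ffunP => i.
  have := congr1 (fun u : src n k => u i) fvw; rewrite /= !ffunE.
  by case: eqP => // _; apply: mulrI; apply: natr_unit_lt_pdiv.
rewrite -[X in (X * _)%N]card_ord -cardsT -cardsX -(card_in_imset f_inj).
exact: subset_leq_card.
Qed.

Lemma cond_event_countE (c : ctT n k) :
  cond_event_count c = (#|unit_vectors| * n ^ k.-1)%N.
Proof.
case: c => a t; rewrite /cond_event_count.
have := card_enc_preimage a t predT; rewrite (eq_bigr (fun=> n ^ k.-1)%N).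
  by rewrite sum_nat_const => <-; apply: eq_card => mk; rewrite !inE andbT.
by move=> y y_unit; rewrite -(card_Ups_fiber t y_unit); apply: eq_card => m; rewrite !inE andbT.
Qed.

Lemma card_enc_event_at (c : ctT n k) (m0 : src n k) :
  #|[set mk : src n k * keyT n k |
      (mk.2 \in keys n k) && (enc mk.2 mk.1 == c) && (mk.1 == m0)]|
  = #|[set y in unit_vectors | Ups y m0 == c.2]|.
Proof.
case: c => a t; rewrite (card_enc_preimage a t (fun mk => mk.1 == m0)) -sum1_card.
rewrite big_mkcond [RHS]big_mkcond; apply: eq_bigr => y _; rewrite inE.
case: ifP => // _; case: (eqVneq (Ups y m0) t) => [e|ne].
  rewrite -(cards1 m0); apply: eq_card => m; rewrite !inE /=.
  by rewrite andbC; case: eqP => // ->; rewrite e eqxx.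
apply: eq_card0 => m; rewrite !inE /= andbC.
by case: eqP => // ->; rewrite (negbTE ne).
Qed.

Lemma cond_prob_le (m : src n k) (c : ctT n k) : m != 0 ->
  cond_prob m c <= (((pdiv n).-1 * n ^ k.-1)%N%:R)^-1.
Proof.
move=> m_neq0; rewrite /cond_prob card_enc_event_at -/(cond_event_count c).
rewrite cond_event_countE //; apply: ratio_le_inv.
  by rewrite muln_gt0 pdiv_pred_gt0 // expn_gt0 ltnW.
by rewrite mulnAC leq_mul2r card_unit_fiber_le ?orbT.
Qed.

Definition successful_forgeries (F : ctT n k -> ctT n k) : {set src n k * keyT n k} :=
  [set mk : src n k * keyT n k | (mk.2 \in keys n k) &&
     (F (enc mk.2 mk.1) != enc mk.2 mk.1) && (dec mk.2 (F (enc mk.2 mk.1)) != None)].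

Lemma card_forgeries_at (F : ctT n k -> ctT n k) (c : ctT n k) :
  ((pdiv n).-1 * #|[set mk in successful_forgeries F | enc mk.2 mk.1 == c]|
     <= #|unit_vectors| * n ^ k.-1)%N.
Proof.
case: c => a t; case Fc: (F (a, t)) => [a' t'].
pose b y := ((a', t') != (a, t)) && (Ups y (a' - a) == t' - t).
have -> : [set mk in successful_forgeries F | enc mk.2 mk.1 == (a, t)] =
    [set mk | (mk.2 \in keys n k) && (enc mk.2 mk.1 == (a, t)) &&
              (((a', t') != (a, t)) && (dec mk.2 (a', t') != None))].
  apply/setP => mk; rewrite !inE; case: (boolP (enc mk.2 mk.1 == (a, t))) => [/eqP ->|_].
    by rewrite Fc !andbT andbA.
  by rewrite !andbF.
have fiber y : y \in unit_vectors -> #|[set m | (Ups y m == t) &&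
    (((a', t') != (a, t)) && (dec (a - m, y) (a', t') != None))]| = (b y * n ^ k.-1)%N.
  move=> y_unit; rewrite -(card_Ups_fiber t y_unit).
  transitivity #|[set m | (Ups y m == t) && b y]|.
    apply: eq_card => m; rewrite !inE /= decE /=; case: (eqVneq (Ups y m) t) => //= e.
    rewrite /b [_ == t' - t]eq_sym subr_eq opprB addrCA (UpsD y m) e [t + _]addrC [t' == _]eq_sym.
    by case: ifP.
  case: (b y); rewrite ?mul1n ?mul0n.
    by apply: eq_card => m; rewrite !inE andbT.
  by apply: eq_card0 => m; rewrite !inE andbF.
rewrite card_enc_preimage (eq_bigr _ fiber) -big_distrl /= mulnA leq_mul2r sum_nat_bool.
apply/orP; right; case: (eqVneq a' a) => [a_eq|ne_a].
  rewrite (eq_card0 (A := [set y in unit_vectors | b y])) ?muln0 // => y.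
  by rewrite !inE /b a_eq UpsB subrr xpair_eqE eqxx /= [0 == _]eq_sym subr_eq0 andNb andbF.
apply: leq_trans (@card_unit_fiber_le (a' - a) (t' - t) _); last by rewrite subr_eq0.
rewrite leq_mul2l; apply/orP; right; apply: subset_leq_card; apply/subsetP => y.
by rewrite !inE => /andP[-> /andP[_ ->]].
Qed.

Lemma card_forgeries_le (F : ctT n k -> ctT n k) :
  ((pdiv n).-1 * #|successful_forgeries F| <= #|[set: src n k]| * #|keys n k|)%N.
Proof.
rewrite (card_sum_fibers (fun mk : src n k * keyT n k => enc mk.2 mk.1)).
rewrite big_distrr /=; apply: leq_trans (leq_sum _ (fun c _ => card_forgeries_at F c)) _.
have n_pow : (n ^ k = n * n ^ k.-1)%N by rewrite -expnS prednK.
rewrite sum_nat_const card_prod card_src card_Zn cardsT card_src card_keys.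
by rewrite -mulnA n_pow; apply: eq_leq; ring.
Qed.

End RDHCode.

Theorem mainTheorem5 (n k : nat) (Hn : (1 < n)%N) (Hodd : odd n) (Hk : (1 <= k)%N) :
  auth_code_with_secrecy
    (((pdiv n).-1 * n ^ k.-1)%N%:R)^-1
    ((pdiv n).-1%:R)^-1
    (~: [set (0 : src n k)]).
Proof.
split=> [m c m_nonzero _ | F].
  by apply: cond_prob_le; rewrite // !inE in m_nonzero.
by apply: ratio_le_inv; [exact: pdiv_pred_gt0 | exact: card_forgeries_le].
Qed.
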